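(* Let $X$ be a compact Hausdorff space and $T\colon X\to X$ a continuous positively expansive map. Let $\hat Z=(\hat r,\hat s\colon\hat Y\to\hat X)$ be a topological graph with $\hat Y,\hat X$ compact Hausdorff, and let $\pi_{\hat Y}\colon\hat Y\to X$, $\pi_{\hat X}\colon\hat X\to X$ be continuous surjections with $T\circ\pi_{\hat Y}=\pi_{\hat X}\circ\hat r$ and $\pi_{\hat Y}=\pi_{\hat X}\circ\hat s$. If $\pi_{\hat Y}$ is locally injective, then the shift $\sigma\colon\hat Z^{-\infty}\to\hat Z^{-\infty}$ is positively expansive.
   Context: A topological graph $(\hat r,\hat s\colon\hat Y\to\hat X)$ consists of continuous maps (range, source). Its left infinite path space is $\hat Z^{-\infty}=\{(\dots,y_{-2},y_{-1})\in\prod_{i<0}\hat Y:\hat s(y_i)=\hat r(y_{i+1})\ \forall i<-1\}$ with the relative product topology, and the shift is $\sigma(\dots,y_{-3},y_{-2},y_{-1})=(\dots,y_{-3},y_{-2})$. A continuous map $S\colon W\to W$ on a compact Hausdorff space is positively expansive if there is a finite open cover $\{U_i\}_{i=1}^m$ of $W$ such that whenever $w,w'\in W$ satisfy: for every $n\ge0$ there is $i_n$ with $S^n(w),S^n(w')\in U_{i_n}$, then $w=w'$ (for metrizable $W$ this is equivalent to the usual metric definition). *)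

From HB Require Import structures.
From mathcomp Require Import all_boot all_order.
From mathcomp Require Import boolp classical_sets topology.
Set Implicit Arguments. Unset Strict Implicit. Unset Printing Implicit Defensive.
Local Open Scope classical_set_scope.

(* Positive expansiveness of S on an S-invariant subset W of a topological
   space T, W carrying the relative topology: there is a finite family of
   open subsets of T whose traces on W cover W (= a finite open cover of W in
   the relative topology) such that any two points of W whose forward orbits
   are always in a common member of the cover coincide. *)
Definition pos_expansive_on {T : topologicalType} (W : set T) (S : T -> T) : Prop :=
  exists (m : nat) (U : 'I_m -> set T),
    (forall i, open (U i)) /\
    W `<=` \bigcup_i U i /\
    (forall w w', W w -> W w' ->
       (forall n : nat, exists i, U i (iter n S w) /\ U i (iter n S w')) ->
       w = w').

Definition pos_expansive {T : topologicalType} (S : T -> T) : Prop :=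
  pos_expansive_on [set: T] S.

Definition locally_injective {T : topologicalType} {U : Type} (f : T -> U) : Prop :=
  forall y : T, exists V : set T, open V /\ V y /\
    (forall a b, V a -> V b -> f a = f b -> a = b).

(* A left infinite path (..., y_{-2}, y_{-1}) is encoded by z : nat -> Y with
   z n = y_{-(n+1)}; the condition s(y_i) = r(y_{i+1}) for i < -1 becomes
   s (z n.+1) = r (z n). *)
Definition left_path_space {X Y : Type} (r s : Y -> X) : set {ptws nat -> Y} :=
  [set z | forall n : nat, s (z n.+1) = r (z n)].

(* The shift sigma(..., y_{-3}, y_{-2}, y_{-1}) = (..., y_{-3}, y_{-2}),
   i.e. (sigma z) n = z n.+1 in our encoding. *)
Definition path_shift {Y : Type} (z : {ptws nat -> Y}) : {ptws nat -> Y} :=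
  fun n => z n.+1.

From HB Require Import structures.
From mathcomp Require Import all_boot all_order.
From mathcomp Require Import boolp classical_sets topology.
From mathcomp Require Import finmap.
Local Open Scope classical_set_scope.

(* Let U be an expansive cover for T and V_1, ..., V_k finitely many open sets
   covering Yh on which piY is injective (compactness).  Cover the path space
   by the sets of paths z with z 0 in V_d and piY (z 0) in U_i.  Along a path,
   piY (z (n + k)) = T^k (piY (z n)), so if the shift orbits of two paths stay
   together then so do the T-orbits of the projections of each coordinate;
   expansiveness of T makes these projections equal, and injectivity of piY on
   the common V_d makes the coordinates equal. *)

(* The library's finite subcover characterisation of compactness is stated for
   pointed spaces; this copy of Y supplies the point. *)
Definition pointed_at {Y : topologicalType} (y0 : Y) : Type := Y.
HB.instance Definition _ (Y : topologicalType) (y0 : Y) :=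
  Topological.copy (pointed_at y0) Y.
HB.instance Definition _ (Y : topologicalType) (y0 : Y) :=
  isPointed.Build (pointed_at y0) y0.

Lemma compact_finite_subcover {Y : topologicalType} {I : choiceType}
    (V : I -> set Y) :
  compact [set: Y] -> (forall i, open (V i)) -> [set: Y] `<=` \bigcup_i V i ->
  exists D : {fset I}, [set: Y] `<=` \bigcup_(i in [set` D]) V i.
Proof.
move=> cY Vop Vcov; have [[y0 _]|Y0] := pselect (exists y : Y, True); last first.
  by exists fset0 => y; exfalso; apply: Y0; exists y.
have : cover_compact [set: pointed_at y0] by rewrite -compact_cover.
move=> /(_ _ [set: I] V (fun i _ => Vop i)) [].
  by move=> y _; have [i _ Vi] := Vcov y Logic.I; exists i.
by move=> D _ DV; exists D.
Qed.

Lemma locally_injective_finite_cover {Y : topologicalType} {Z : Type}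
    {f : Y -> Z} :
  compact [set: Y] -> locally_injective f ->
  exists (I : finType) (V : I -> set Y),
    [/\ forall i, open (V i), [set: Y] `<=` \bigcup_i V i &
        forall i a b, V i a -> V i b -> f a = f b -> a = b].
Proof.
move=> cY /choice[V HV].
have [|y _|D DV] := @compact_finite_subcover Y Y V cY.
- by move=> y; case: (HV y).
- by exists y => //; case: (HV y) => _ [].
exists D, (fun d => V (val d)); split.
- by move=> d; case: (HV (val d)).
- by move=> y /DV[d Dd Vd]; exists (FSetSub Dd).
- by move=> d; case: (HV (val d)) => _ [].
Qed.

Lemma pos_expansive_on_fin {T : topologicalType} (W : set T) (S : T -> T)
    (I : finType) (U : I -> set T) :
  (forall i, open (U i)) -> W `<=` \bigcup_i U i ->
  (forall w w', W w -> W w' ->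
     (forall n, exists i, U i (iter n S w) /\ U i (iter n S w')) -> w = w') ->
  pos_expansive_on W S.
Proof.
move=> Uop Ucov Uexp; exists #|{: I}|, (fun t => U (enum_val t)); split => //.
split=> [w /Ucov[i _ Ui]|w w' Ww Ww' shadow].
  by exists (enum_rank i); rewrite //= enum_rankK.
by apply: Uexp => // n; have [t] := shadow n; exists (enum_val t).
Qed.

Lemma iter_path_shift (Y : Type) (n : nat) (z : {ptws nat -> Y}) (k : nat) :
  iter n (@path_shift Y) z k = z (n + k)%N.
Proof. by elim: n k => [|n IH] k //=; rewrite /path_shift IH addnS. Qed.

Lemma left_path_proj_iter {X Y Xh : Type} {T : X -> X} {r s : Y -> Xh}
    {piY : Y -> X} {piX : Xh -> X} :
  (forall y, T (piY y) = piX (r y)) -> (forall y, piY y = piX (s y)) ->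
  forall z, left_path_space r s z ->
  forall n k, piY (z (n + k)%N) = iter k T (piY (z n)).
Proof.
move=> Tr piYs z zpath n; elim=> [|k IH]; first by rewrite addn0.
by rewrite /= -IH Tr -zpath -piYs addnS.
Qed.

Theorem proposition4p16
  (X : topologicalType) (T : X -> X)
  (hX : hausdorff_space X) (cX : compact [set: X])
  (hTc : continuous T) (hTe : pos_expansive T)
  (Yh Xh : topologicalType) (r s : Yh -> Xh)
  (hYh : hausdorff_space Yh) (cYh : compact [set: Yh])
  (hXh : hausdorff_space Xh) (cXh : compact [set: Xh])
  (hr : continuous r) (hs : continuous s)
  (piY : Yh -> X) (piX : Xh -> X)
  (hpiYc : continuous piY) (hpiXc : continuous piX)
  (hpiYs : forall x : X, exists y : Yh, piY y = x)
  (hpiXs : forall x : X, exists x' : Xh, piX x' = x)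
  (hcomm1 : forall y : Yh, T (piY y) = piX (r y))
  (hcomm2 : forall y : Yh, piY y = piX (s y))
  (hloc : locally_injective piY) :
  pos_expansive_on (left_path_space r s) (@path_shift Yh).
Proof.
have [I [V [Vop Vcov Vinj]]] := locally_injective_finite_cover cYh hloc.
have [m [U [Uop [Ucov Uexp]]]] := hTe.
have path_iter := left_path_proj_iter hcomm1 hcomm2.
apply: (@pos_expansive_on_fin _ _ _ ('I_m * I)%type
  (fun id => (fun z : {ptws nat -> Yh} => z 0) @^-1`
               (piY @^-1` U id.1 `&` V id.2))).
- move=> [i d]; apply: open_comp => [z _|]; first exact: proj_continuous.
  by apply: openI => //; apply: open_comp => // y _; exact: hpiYc.
- move=> z _; have [i _ Ui] := Ucov (piY (z 0)) Logic.I.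
  by have [d _ Vd] := Vcov (z 0) Logic.I; exists (i, d).
move=> w w' wpath w'path shadow.
have proj_eq n : piY (w n) = piY (w' n).
  apply: Uexp => // k; have [[i d]] := shadow (n + k)%N.
  rewrite /= !iter_path_shift !addn0 => -[[Uw _] [Uw' _]].
  by exists i; rewrite -path_iter // -path_iter.
apply: funext => n; have [[i d]] := shadow n.
rewrite /= !iter_path_shift !addn0 => -[[_ Vw] [_ Vw']].
exact: Vinj d _ _ Vw Vw' (proj_eq n).
Qed.
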